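(* Let $N\ge1$, $\Gamma\in\{\Gamma_0(N),\Gamma_1(N)\}$, $k\in\mathbb{Z}$, $m\in\mathbb{Z}_{>0}$, and let $\varphi$ be a meromorphic Jacobi form of weight $k$ and index $m$ w.r.t. $\Gamma\ltimes\mathbb{Z}^2$ with simple poles at $z=z_s=\alpha\tau+\beta$ for $s=(\alpha,\beta)\in S(\varphi)\subset\mathbb{Q}^2$. Then $D_{(\alpha+\lambda,\beta+\mu)}(\tau)=\mathbf{e}(m(\mu\alpha-\lambda\beta))D_{(\alpha,\beta)}(\tau)$ for $(\lambda,\mu)\in\mathbb{Z}^2$, and $D_s(\frac{a\tau+b}{c\tau+d})=(c\tau+d)^{k-1}D_{s\gamma}(\tau)$ for $\gamma=\begin{pmatrix}a&b\\c&d\end{pmatrix}\in\Gamma$, where $s\gamma=(a\alpha+c\beta,b\alpha+d\beta)$.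
   Context: $\mathbf{e}(t)=e^{2\pi it}$. $\Gamma_0(N)$: $c\equiv0\bmod N$; $\Gamma_1(N)$: also $a\equiv d\equiv1\bmod N$. A meromorphic Jacobi form of weight $k$, index $m$ for $\Gamma\ltimes\mathbb{Z}^2$ is a function on $\mathbb{H}\times\mathbb{C}$, meromorphic in $z$ and weakly holomorphic in $\tau$, with $\varphi(\frac{a\tau+b}{c\tau+d},\frac z{c\tau+d})=(c\tau+d)^k\mathbf{e}(\frac{mcz^2}{c\tau+d})\varphi(\tau,z)$ for $\gamma\in\Gamma$ and $\varphi(\tau,z+\lambda\tau+\mu)=\mathbf{e}(-m(\lambda^2\tau+2\lambda z))\varphi(\tau,z)$ for $(\lambda,\mu)\in\mathbb{Z}^2$. $D_s(\tau)=2\pi i\,\mathbf{e}(m\alpha z_s)\operatorname{Res}_{z=z_s}\varphi(\tau,z)$. *)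

From HB Require Import structures.
From mathcomp Require Import all_boot all_order all_algebra.
From mathcomp Require Import complex.
From mathcomp Require Import boolp classical_sets reals sequences exp trigo.
Set Implicit Arguments. Unset Strict Implicit. Unset Printing Implicit Defensive.
Import Order.TTheory GRing.Theory Num.Theory.
Local Open Scope ring_scope.

Section Defs.
Variable R : realType.
Local Notation C := R[i].

Definition Imc (z : C) : R := complex.Im z.
Definition in_H (tau : C) : Prop := 0 < Imc tau.

Definition cexp (z : C) : C :=
  ((expR (complex.Re z))%:C * (cos (complex.Im z) +i* sin (complex.Im z)))%C.

Definition ee (t : C) : C := cexp (2%:R * (pi%:C)%C * 'i%C * t).

Definition climit (f : C -> C) (z0 l : C) : Prop :=
  forall eps : R, 0 < eps -> exists2 delta : R, 0 < delta &
    forall z : C, 0 < `|z - z0| -> `|z - z0| < (delta%:C)%C ->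
      `|f z - l| < (eps%:C)%C.

Definition cdiff (f : C -> C) (z0 : C) : Prop :=
  exists l, climit (fun z => (f z - f z0) / (z - z0)) z0 l.

(* residue at a simple pole: Res_{z=z0} f = lim_{z -> z0} (z - z0) f(z)
   (junk value 0 if the limit does not exist) *)
Definition simple_res (f : C -> C) (z0 : C) : C :=
  xget 0 [set l | climit (fun z => (z - z0) * f z) z0 l].

Definition zs (s : rat * rat) (tau : C) : C := ratr s.1 * tau + ratr s.2.

Definition poles (S : set (rat * rat)) (tau z : C) : Prop :=
  exists2 s, S s & z = zs s tau.

(* Gamma_0(N) (G1 = false) or Gamma_1(N) (G1 = true); matrices (a b; c d) *)
Definition inGamma (G1 : bool) (N : nat) (a b c d : int) : Prop :=
  a * d - b * c = 1 /\ (N%:Z %| c)%Z /\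
  (G1 -> (a == 1 %[mod N%:Z])%Z /\ (d == 1 %[mod N%:Z])%Z).

Definition intC (n : int) : C := n%:~R.

(* meromorphic Jacobi form of weight k, index m for Gamma |x Z^2, whose poles
   are exactly the simple poles z = z_s, s in S *)
Definition mero_jacobi_simple (G1 : bool) (N : nat) (k : int) (m : nat)
    (phi : C -> C -> C) (S : set (rat * rat)) : Prop :=
  (forall tau z, in_H tau -> exists2 delta : R, 0 < delta &
      forall w, 0 < `|w - z| -> `|w - z| < (delta%:C)%C -> ~ poles S tau w) /\
  (forall tau z, in_H tau -> ~ poles S tau z ->
      cdiff (phi tau) z /\ cdiff (fun t => phi t z) tau) /\
  (forall s tau, S s -> in_H tau ->
      exists2 l, l != 0 & climit (fun z => (z - zs s tau) * phi tau z) (zs s tau) l) /\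
  (forall a b c d, inGamma G1 N a b c d -> forall tau z, in_H tau -> ~ poles S tau z ->
      phi ((intC a * tau + intC b) / (intC c * tau + intC d))
          (z / (intC c * tau + intC d))
      = (intC c * tau + intC d) ^ k
        * ee (m%:R * intC c * z ^+ 2 / (intC c * tau + intC d)) * phi tau z) /\
  (forall (lam mu : int) tau z, in_H tau -> ~ poles S tau z ->
      phi tau (z + intC lam * tau + intC mu)
      = ee (- (m%:R * (intC lam ^+ 2 * tau + 2%:R * intC lam * z))) * phi tau z).

Definition Dres (m : nat) (phi : C -> C -> C) (s : rat * rat) (tau : C) : C :=
  2%:R * (pi%:C)%C * 'i%C * ee (m%:R * ratr s.1 * zs s tau)
  * simple_res (phi tau) (zs s tau).

End Defs.

(* Both laws come from one change of variables for residues at simple poles: if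
   (z - z0) f(z) -> l as z -> z0, and g(w) = h(w) f(q w + t) near w0 = (z0 - t)/q
   with h continuous, then Res_{w0} g = q^-1 l h(w0).  The elliptic law gives
   this with q = 1 and h(w) = e(-m(lam^2 tau + 2 lam (w - lam tau - mu))), the
   modular law with q = (c tau + d)^-1 and h(w) = (c tau + d)^-k e(-m c w^2/(c tau + d)).
   What remains are identities between exponents: in the elliptic case they differ
   by the integer m lam mu, in the modular case they agree because ad - bc = 1. *)

Set Warnings "-notation-overridden,-ambiguous-paths".
From HB Require Import structures.
From mathcomp Require Import all_boot all_order all_algebra.
From mathcomp Require Import complex.
From mathcomp Require Import boolp classical_sets reals sequences exp trigo.
From mathcomp Require Import topology normedtype.
From mathcomp Require Import ring.
Import Order.TTheory GRing.Theory Num.Theory.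
Import numFieldNormedType.Exports.
Set Implicit Arguments. Unset Strict Implicit. Unset Printing Implicit Defensive.
Local Open Scope ring_scope.
Local Open Scope classical_set_scope.

Section ComplexAnalysis.
Variable R : realType.
(* [R[i]] itself carries no topology; its regular copy [R[i]^o] is a normed field. *)
Local Notation C := R[i]^o.

Lemma gt0_realC (e : C) : 0 < e -> e = (complex.Re e)%:C%C /\ 0 < complex.Re e.
Proof. by case: e => a b; rewrite ltcE /= => /andP[/eqP -> ?]. Qed.

Lemma near_dnbhs_radius (z0 : C) (P : C -> Prop) :
  (exists2 d : R, 0 < d & forall z : C, 0 < `|z - z0| -> `|z - z0| < d%:C%C -> P z) ->
  \forall z \near z0^', P z.
Proof.
move=> [d d0 dP]; apply/nbhs_ballP; exists d%:C%C; first by rewrite /= ltcR.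
move=> z /=; rewrite /ball /= distrC => zd zz0.
by apply: dP; rewrite // normr_gt0 subr_eq0.
Qed.

Lemma climitP (f : C -> C) (z0 l : C) :
  climit f z0 l <-> f z @[z --> z0^'] --> l.
Proof.
split=> [fl | /cvgrPdistC_lt fl e e0].
  apply/cvgrPdistC_lt => e /gt0_realC[-> e0]; exact/near_dnbhs_radius/fl.
have /nbhs_ballP[d /gt0_realC[dE d0] fd] := fl e%:C%C ltac:(by rewrite ltcR).
exists (complex.Re d) => // z z0z zd; apply: fd; last by rewrite -subr_eq0 -normr_gt0.
by rewrite /ball /= distrC dE.
Qed.

Lemma simple_res_cvg (f : C -> C) (z0 l : C) :
  (z - z0) * f z @[z --> z0^'] --> l -> simple_res f z0 = l.
Proof.
move=> fl; rewrite /simple_res; apply: xget_unique; first exact/climitP.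
by move=> l' /climitP fl'; apply: cvg_unique fl' fl.
Qed.

Lemma contraction_continuous (g : C -> R) :
  (forall z w : C, (`|g z - g w|%:C <= `|z - w|)%C) -> continuous g.
Proof.
move=> gz z; apply/(@cvgrPdist_lt _ _ _ (nbhs z)) => e e0.
have : \forall w \near z, `|z - w| < e%:C%C.
  by apply: (@cvgr_dist_lt _ _ _ (nbhs z)); [exact: cvg_id | rewrite ltcR].
apply: filterS => w zw.
by rewrite -(ltcR _ e) (le_lt_trans (gz z w)).
Qed.

Lemma continuous_Re : continuous (@complex.Re R : C -> R).
Proof. by apply: contraction_continuous => z w; rewrite -raddfB normc_ge_Re. Qed.

Lemma continuous_Im : continuous (@complex.Im R : C -> R).
Proof.
apply: contraction_continuous => z w.
have ImE (u : C) : complex.Im u = complex.Re (u * - 'i%C) by case: u => a b /=; ring.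
have normi : `|'i%C : C| = 1 by rewrite normc_def /= expr0n expr1n add0r sqrtr1.
by rewrite !ImE -raddfB -mulrBl (le_trans (normc_ge_Re _)) // normrM normrN normi mulr1.
Qed.

Lemma continuous_realC : continuous (fun x : R => x%:C%C : C).
Proof.
move=> x; apply/cvgrPdist_lt => e /gt0_realC[eE e0]; rewrite eE.
have : \forall t \near x, `|x - t| < complex.Re e.
  by apply: (@cvgr_dist_lt _ _ _ (nbhs x)); [exact: cvg_id | ].
apply: filterS => t xt.
by rewrite -rmorphB normc_def /= expr0n addr0 sqrtr_sqr ltcR.
Qed.

Lemma continuous_realC_comp (p : C -> R) (g : R -> R) :
  continuous p -> continuous g -> continuous (fun z => (g (p z))%:C%C : C).
Proof.
move=> cp cg z.
exact: continuous_comp (continuous_comp (cp z) (cg _)) (@continuous_realC _).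
Qed.

Lemma continuous_cexp : continuous (@cexp R : C -> C).
Proof.
have -> : @cexp R = fun z : C => (expR (complex.Re z))%:C%C *
    ((cos (complex.Im z))%:C%C + 'i%C * (sin (complex.Im z))%:C%C) :> C.
  by apply/funext => -[a b]; rewrite /cexp /=; simpc.
move=> z; apply: (@cvgM _ _ (nbhs z)); last apply: (@cvgD _ _ _ (nbhs z)).
- exact: continuous_realC_comp continuous_Re (@continuous_expR R) z.
- exact: continuous_realC_comp continuous_Im (@continuous_cos R) z.
- apply: (@cvgMl_tmp _ _ (nbhs z)).
  exact: continuous_realC_comp continuous_Im (@continuous_sin R) z.
Qed.

Lemma continuous_ee : continuous (@ee R : C -> C).
Proof.
move=> z; apply: continuous_comp (@continuous_cexp _).
apply: (@cvgMl_tmp _ _ (nbhs z)); exact: cvg_id.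
Qed.

Lemma continuous_ee_sqr (c0 K : C) : continuous (fun w : C => c0 * ee (K * (w * w))).
Proof.
move=> w; apply: (@cvgMl_tmp _ _ (nbhs w)).
have sq : (fun x : C => K * (x * x)) @ w --> K * (w * w).
  apply: (@cvgMl_tmp _ _ (nbhs w)).
  by apply: (@cvgM _ _ (nbhs w)); exact: cvg_id.
exact: continuous_comp sq (@continuous_ee _).
Qed.

Lemma continuous_affine (q t : C) : continuous (fun w => q * w + t).
Proof.
move=> w; apply: (@cvgD _ _ _ (nbhs w)); last exact: cvg_cst.
by apply: (@cvgMl_tmp _ _ (nbhs w)); exact: cvg_id.
Qed.

Lemma cvg_dnbhs_affine (q t w0 z0 : C) : q != 0 -> q * w0 + t = z0 ->
  q * w + t @[w --> w0^'] --> z0^'.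
Proof.
move=> q0 <-; apply: continuous_injective_withinNx; first exact: continuous_affine.
by move=> w /(addIr t) /(mulfI q0).
Qed.

Lemma simple_res_affine (f g h : C -> C) (q t w0 z0 l : C) :
  q != 0 -> q * w0 + t = z0 -> {for w0, continuous h} ->
  (\forall w \near w0^', g w = h w * f (q * w + t)) ->
  (z - z0) * f z @[z --> z0^'] --> l ->
  simple_res g w0 = q^-1 * l * h w0.
Proof.
move=> q0 qw0 hc gE fl; apply: simple_res_cvg.
have lim_f : q^-1 * ((q * w + t - z0) * f (q * w + t)) @[w --> w0^'] --> q^-1 * l.
  by apply: cvgMl_tmp; exact: cvg_comp (cvg_dnbhs_affine q0 qw0) fl.
have lim_h : h w @[w --> w0^'] --> h w0 := cvg_within_filter (FF := nbhs_filter w0) _ hc.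
apply: cvg_trans (near_eq_cvg _) (cvgM lim_f lim_h).
apply: filterS gE => w /= ->.
have -> : q * w + t - z0 = q * (w - w0) by rewrite -qw0; ring.
by rewrite -(mulrA q) mulKf // -mulrA [f _ * _]mulrC.
Qed.

Lemma cexpD (u v : C) : cexp (u + v) = cexp u * cexp v.
Proof.
case: u => a b; case: v => c d; rewrite /cexp /= expRD cosD sinD.
by apply/eqP; rewrite eq_complex /=; apply/andP; split; apply/eqP; ring.
Qed.

Lemma eeD (x y : C) : ee (x + y) = ee x * ee y.
Proof. by rewrite /ee mulrDr cexpD. Qed.

Lemma ee0 : ee (0 : C) = 1.
Proof. by rewrite /ee mulr0 /cexp /=; simpc; rewrite expR0 cos0 sin0 mulr1 mulr0. Qed.

Lemma eeN (x : C) : ee (- x) * ee x = 1.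
Proof. by rewrite -eeD addNr ee0. Qed.

Lemma ee1 : ee (1 : C) = 1.
Proof.
rewrite /ee mulr1 /cexp /=; simpc.
by rewrite mulrDl mul1r -mulr2n cos2pi sin2pi expR0 mulr1 mulr0.
Qed.

Lemma ee_int (j : int) : ee (j%:~R : C) = 1.
Proof.
have ee_nat (n : nat) : ee (n%:R : C) = 1.
  by elim: n => [|n IHn]; rewrite ?ee0 // -addn1 natrD eeD IHn ee1 mulr1.
case: j => n; first exact: ee_nat.
by rewrite NegzE mulrNz -pmulrn -[RHS](eeN n.+1%:R) ee_nat mulr1.
Qed.

Lemma ee_addz (x : C) (j : int) : ee (x + j%:~R) = ee x.
Proof. by rewrite eeD ee_int mulr1. Qed.

Lemma mobius_real_in_H (a b c d : R) (tau : C) :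
  a * d - b * c = 1 -> 0 < complex.Im tau ->
  c%:C%C * tau + d%:C%C != 0 /\
  0 < complex.Im ((a%:C%C * tau + b%:C%C) / (c%:C%C * tau + d%:C%C)).
Proof.
case: tau => x y /= det y0; simpc; set D := (_ ^+ 2 + _ ^+ 2).
have D0 : 0 < D.
  rewrite lt_def (addr_ge0 (sqr_ge0 _) (sqr_ge0 _)) andbT paddr_eq0 ?sqr_ge0 //.
  rewrite !sqrf_eq0 mulf_eq0 (gt_eqF y0) orbF; apply/negP => /andP[/eqP + /eqP c0].
  rewrite c0 mul0r add0r => d0; move/eqP: det.
  by rewrite c0 d0 !mulr0 subrr eq_sym oner_eq0.
split.
  apply: contraTneq D0 => -[cxd cy].
  by rewrite /D cxd cy expr0n addr0 ltxx.
rewrite [ltRHS](_ : _ = y * (a * d - b * c) / D); last by field; rewrite gt_eqF.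
by rewrite det mulr1 divr_gt0.
Qed.

Lemma intC_real (j : int) : intC R j = (j%:~R : R)%:C%C.
Proof. by rewrite /intC rmorph_int. Qed.

End ComplexAnalysis.

Definition jfactor {R : realType} (c d : int) (tau : R[i]) : R[i] :=
  intC R c * tau + intC R d.

Definition pair_act (s : rat * rat) (a b c d : int) : rat * rat :=
  (a%:~R * s.1 + c%:~R * s.2, b%:~R * s.1 + d%:~R * s.2).

Definition mobius {R : realType} (a b c d : int) (tau : R[i]) : R[i] :=
  (intC R a * tau + intC R b) / jfactor c d tau.

Lemma mobius_in_H (R : realType) (a b c d : int) (tau : R[i]) :
  a * d - b * c = 1 -> in_H tau -> jfactor c d tau != 0 /\ in_H (mobius a b c d tau).
Proof.
move=> det; rewrite /in_H /Imc /mobius /jfactor !intC_real; apply: mobius_real_in_H.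
by rewrite -!intrM -intrB det.
Qed.

Lemma zs_mobius (R : realType) s (a b c d : int) (tau : R[i]) :
  jfactor c d tau != 0 ->
  zs (pair_act s a b c d) tau = jfactor c d tau * zs s (mobius a b c d tau).
Proof.
move=> q0; rewrite /zs /mobius /= !rmorphD !rmorphM /= !ratr_int.
rewrite mulrDr [jfactor _ _ _ * (_ * _)]mulrCA [_ / jfactor _ _ _]mulrC mulVKf //.
by rewrite /jfactor /intC; ring.
Qed.

Lemma zs_translate (R : realType) s (lam mu : int) (tau : R[i]) :
  zs (s.1 + lam%:~R, s.2 + mu%:~R) tau = zs s tau + (intC R lam * tau + intC R mu).
Proof. by rewrite /zs /= !rmorphD /= !ratr_int /intC; ring. Qed.

Section JacobiResidues.
Variables (R : realType) (G1 : bool) (N : nat) (k : int) (m : nat).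
Variables (phi : R[i] -> R[i] -> R[i]) (S : set (rat * rat)).
Hypothesis phiJ : mero_jacobi_simple G1 N k m phi S.
Local Notation C := R[i]^o.

Lemma near_nonpole (tau z : C) : in_H tau -> \forall w \near z^', ~ poles S tau w.
Proof. by case: phiJ => iso _ /(iso tau z) isoz; apply: near_dnbhs_radius. Qed.

Lemma cvg_simple_res s (tau : C) : S s -> in_H tau ->
  (z - zs s tau) * phi tau z @[z --> (zs s tau : C)^']
    --> (simple_res (phi tau) (zs s tau) : C).
Proof.
case: phiJ => _ [_ [simple _]] Ss /(simple s tau Ss) [l _ /climitP fl].
by rewrite (simple_res_cvg fl).
Qed.

Lemma simple_res_translate s (lam mu : int) (tau : C) : S s -> in_H tau ->
  simple_res (phi tau) (zs s tau + (intC R lam * tau + intC R mu))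
  = ee (- (m%:R * (intC R lam ^+ 2 * tau + 2%:R * intC R lam * zs s tau)))
    * simple_res (phi tau) (zs s tau).
Proof.
move=> Ss Htau; set z0 := zs s tau; set T := intC R lam * tau + intC R mu.
set a := - (m%:R * (2%:R * intC R lam)) : C.
set b := - (m%:R * (intC R lam ^+ 2 * tau)) - a * T.
have z0T : 1 * (z0 + T) + - T = z0 by rewrite mul1r addrK.
rewrite (simple_res_affine (h := fun w => ee (a * w + b)) (oner_neq0 _) z0T _ _
  (cvg_simple_res Ss Htau)).
- by rewrite invr1 mul1r mulrC; congr (ee _ * _); rewrite /b /a; ring.
- exact: continuous_comp (@continuous_affine _ a b _) (@continuous_ee _ _).
- near=> w.
  have np : ~ poles S tau (1 * w + - T).
    near: w; have shift := cvg_dnbhs_affine (oner_neq0 _) z0T.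
    exact: shift _ (near_nonpole z0 Htau).
  case: phiJ => _ [_ [_ [_ ell]]]; have := ell lam mu tau _ Htau np.
  rewrite -addrA mul1r subrK => ->; congr (ee _ * _); rewrite /b /a; ring.
Unshelve. all: by end_near.
Qed.

Lemma simple_res_modular s (a b c d : int) (tau : C) :
  S s -> inGamma G1 N a b c d -> in_H tau ->
  simple_res (phi tau) (zs (pair_act s a b c d) tau)
  = jfactor c d tau * (jfactor c d tau ^ k)^-1
    * ee (- (m%:R * intC R c / jfactor c d tau)
          * (zs (pair_act s a b c d) tau * zs (pair_act s a b c d) tau))
    * simple_res (phi (mobius a b c d tau)) (zs s (mobius a b c d tau)).
Proof.
move=> Ss Hg Htau; have [q0 Hgtau] := mobius_in_H Hg.1 Htau.
set q := jfactor c d tau; set w0 := zs _ tau; set K := - (m%:R * intC R c / q).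
have w0E : q^-1 * w0 + 0 = zs s (mobius a b c d tau).
  by rewrite addr0 /w0 zs_mobius // mulKf.
rewrite (simple_res_affine (h := fun w => (q ^ k)^-1 * ee (K * (w * w)))
  (invr_neq0 q0) w0E _ _ (cvg_simple_res Ss Hgtau)).
- by rewrite invrK -/q; ring.
- exact: continuous_ee_sqr.
near=> w.
have np : ~ poles S tau w by near: w; exact: near_nonpole.
case: phiJ => _ [_ [_ [modular _]]].
have -> : K * (w * w) = - (m%:R * intC R c * w ^+ 2 / q) by rewrite /K; ring.
have := modular a b c d Hg tau w Htau np.
rewrite -/(jfactor c d tau) -/(mobius a b c d tau) addr0 mulrC -/q => ->.
by rewrite mulrACA mulKf ?expfz_neq0 // mulrA [ee _ * _]mulrC eeN mul1r.
Unshelve. all: by end_near.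
Qed.

Lemma Dres_translate s (lam mu : int) (tau : C) : S s -> in_H tau ->
  Dres m phi (s.1 + lam%:~R, s.2 + mu%:~R) tau
  = ee (m%:R * ratr (mu%:~R * s.1 - lam%:~R * s.2)) * Dres m phi s tau.
Proof.
move=> Ss Htau; rewrite /Dres zs_translate simple_res_translate //.
set z0 := zs s tau; set P := 2%:R * _ * _.
have key : ee (m%:R * ratr (s.1 + lam%:~R, s.2 + mu%:~R).1
                 * (z0 + (intC R lam * tau + intC R mu)))
    * ee (- (m%:R * (intC R lam ^+ 2 * tau + 2%:R * intC R lam * z0)))
  = ee (m%:R * ratr (mu%:~R * s.1 - lam%:~R * s.2)) * ee (m%:R * ratr s.1 * z0).
  rewrite -!eeD -[RHS](@ee_addz R _ (m%:Z * lam * mu)); congr ee.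
  by rewrite /z0 /zs !(rmorphD, rmorphN, rmorphM) /= !ratr_int pmulrn /intC; ring.
by rewrite mulrA -(mulrA P) key; ring.
Qed.

Lemma Dres_modular s (a b c d : int) (tau : C) :
  S s -> inGamma G1 N a b c d -> in_H tau ->
  Dres m phi s (mobius a b c d tau)
  = jfactor c d tau ^ (k - 1) * Dres m phi (pair_act s a b c d) tau.
Proof.
move=> Ss Hg Htau; have [q0 _] := mobius_in_H Hg.1 Htau.
rewrite /Dres (simple_res_modular Ss Hg Htau).
set q := jfactor c d tau; set z0 := zs s _; set w0 := zs (pair_act _ _ _ _ _) tau.
have key : ee (m%:R * ratr (pair_act s a b c d).1 * w0)
    * ee (- (m%:R * intC R c / q) * (w0 * w0)) = ee (m%:R * ratr s.1 * z0).
  have z0E : z0 = w0 / q by rewrite /w0 zs_mobius // mulrC mulKf.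
  have alphaE : ratr (pair_act s a b c d).1 * q - intC R c * w0 = ratr s.1.
    rewrite /w0 /q /pair_act /zs /jfactor /= !(rmorphD, rmorphM) /= !ratr_int.
    transitivity (ratr s.1 * (intC R a * intC R d - intC R b * intC R c)).
      by rewrite /intC; ring.
    by rewrite /intC -!intrM -intrB Hg.1 mulr1.
  by rewrite -eeD z0E -alphaE; congr ee; field.
by rewrite -key exprzDr ?unitfE // exprN1; field; rewrite expfz_neq0.
Qed.

End JacobiResidues.

Theorem proposition3p2 (R : realType) (N : nat) (G1 : bool) (k : int) (m : nat)
    (phi : R[i] -> R[i] -> R[i]) (S : set (rat * rat)) :
  (1 <= N)%N -> (0 < m)%N ->
  mero_jacobi_simple G1 N k m phi S ->
  (forall (s : rat * rat) (lam mu : int) (tau : R[i]), S s -> in_H tau ->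
     Dres m phi (s.1 + lam%:~R, s.2 + mu%:~R) tau
     = ee (m%:R * ratr (mu%:~R * s.1 - lam%:~R * s.2)) * Dres m phi s tau) /\
  (forall (s : rat * rat) (a b c d : int) (tau : R[i]), S s -> inGamma G1 N a b c d ->
     in_H tau ->
     Dres m phi s ((intC R a * tau + intC R b) / (intC R c * tau + intC R d))
     = (intC R c * tau + intC R d) ^ (k - 1)
       * Dres m phi (a%:~R * s.1 + c%:~R * s.2, b%:~R * s.1 + d%:~R * s.2) tau).
Proof.
move=> _ _ phiJ; split=> *; [exact: (Dres_translate phiJ) | exact: (Dres_modular phiJ)].
Qed.
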